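(* Let $G$ be a small category and $X$ a set with a partial category action by $G$, and let $\overline{X}$, $\sim$, $\simeq$ and $[g,x]$ be as defined below. If $(g,x),(g',x')\in\overline{X}$ satisfy $[g,x]=[g',x']$, then $g\cdot x$ is defined if and only if $g'\cdot x'$ is defined, and in that case $g\cdot x = g'\cdot x'$.
   Context: Conventions: $G$ is a small category; objects are identified with their identity morphisms, so ${\rm ob}(G)\subseteq{\rm mor}(G)$; $d(g), c(g)$ are domain and codomain, $G^2=\{(g,h)\mid d(g)=c(h)\}$. A partial category action by $G$ on $X$ is a partial function ${\rm mor}(G)\times X\to X$, $(g,x)\mapsto g\cdot x$ where defined, such that: (C1) for every $x$ there is $e\in{\rm ob}(G)$ with $e\cdot x$ defined, and whenever $f\in{\rm ob}(G)$ and $f\cdot x$ is defined, $f\cdot x=x$; (C2) if $g\cdot x$ is defined then $d(g)\cdot x$ is defined; (C3) if $(g,h)\in G^2$ and $h\cdot x$ is defined, then $(gh)\cdot x$ is defined iff $g\cdot(h\cdot x)$ is defined, and then they are equal. Let $\overline{X} = \{(g,x)\in{\rm mor}(G)\times X\mid d(g)\cdot x\text{ defined}\}$. Define $(g,x)\sim(g',x')$ on $\overline{X}$ if either (i) there is $h\in{\rm mor}(G)$ with $(g',h)\in G^2$, $h\cdot x$ defined, $g=g'h$ and $x'=h\cdot x$; or (ii) $x=x'$, $g,g'\in{\rm ob}(G)$ and both $g\cdot x$ and $g'\cdot x'$ are defined. Let $\simeq$ be the equivalence relation on $\overline{X}$ generated by $\sim$, and $[g,x]$ the $\simeq$-class of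 $(g,x)$. *)

From Stdlib Require Import Relations.
Set Implicit Arguments.

(** A small category, objects identified with their identity morphisms. *)
Record SmallCat := {
  mor : Type;
  is_ob : mor -> Prop;
  dom : mor -> mor;
  cod : mor -> mor;
  comp : mor -> mor -> mor;            (* comp g h = g h, meaningful when dom g = cod h *)
  ob_dom : forall g, is_ob (dom g);
  ob_cod : forall g, is_ob (cod g);
  dom_ob : forall e, is_ob e -> dom e = e;
  cod_ob : forall e, is_ob e -> cod e = e;
  dom_comp : forall g h, dom g = cod h -> dom (comp g h) = dom h;
  cod_comp : forall g h, dom g = cod h -> cod (comp g h) = cod g;
  comp_id_l : forall g, comp (cod g) g = g;
  comp_id_r : forall g, comp g (dom g) = g;
  comp_assoc : forall f g h, dom f = cod g -> dom g = cod h ->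
      comp f (comp g h) = comp (comp f g) h
}.

Definition composable (G : SmallCat) (g h : mor G) : Prop := dom G g = cod G h.

(** A partial function mor(G) x X -> X, as an option-valued function. *)
Definition defined {A : Type} (o : option A) : Prop := exists a, o = Some a.

Definition partial_cat_action {G : SmallCat} {X : Type}
    (act : mor G -> X -> option X) : Prop :=
  (forall x, exists e, is_ob G e /\ defined (act e x)) /\
  (forall f x, is_ob G f -> defined (act f x) -> act f x = Some x) /\
  (forall g x, defined (act g x) -> defined (act (dom G g) x)) /\
  (forall g h x y, composable G g h -> act h x = Some y ->
      (defined (act (comp G g h) x) <-> defined (act g y)) /\
      (defined (act (comp G g h) x) -> act (comp G g h) x = act g y)).

Definition Xbar {G : SmallCat} {X : Type} (act : mor G -> X -> option X)
    (p : mor G * X) : Prop := defined (act (dom G (fst p)) (snd p)).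

Definition sim {G : SmallCat} {X : Type} (act : mor G -> X -> option X)
    (p q : mor G * X) : Prop :=
  Xbar act p /\ Xbar act q /\
  ( (exists h, composable G (fst q) h /\ act h (snd p) = Some (snd q) /\
               fst p = comp G (fst q) h)
    \/ (snd p = snd q /\ is_ob G (fst p) /\ is_ob G (fst q) /\
        defined (act (fst p) (snd p)) /\ defined (act (fst q) (snd q))) ).

(** ≃ : the equivalence relation on Xbar generated by ~ ; [g,x] = [g',x']
    is expressed as simeq act (g,x) (g',x') with both pairs in Xbar. *)
Definition simeq {G : SmallCat} {X : Type} (act : mor G -> X -> option X) :
    relation (mor G * X) := clos_refl_sym_trans _ (sim act).

From Stdlib Require Import Relations.
Set Implicit Arguments.

(* The partial map p = (g, x) |-> g . x is constant on each ~-step (by (C3)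
   for steps of kind (i), by (C1) for steps of kind (ii)), hence on every
   equivalence class of the generated relation. *)

Lemma clos_refl_sym_trans_invariant (A B : Type) (R : relation A) (f : A -> B) :
  (forall a b, R a b -> f a = f b) ->
  forall a b, clos_refl_sym_trans A R a b -> f a = f b.
Proof.
  intros HR a b Hab.
  induction Hab as [a b Hab | a | a b _ IH | a b c _ IHab _ IHbc].
  - exact (HR a b Hab).
  - reflexivity.
  - symmetry; exact IH.
  - congruence.
Qed.

Section PartialCatAction.

Variables (G : SmallCat) (X : Type) (act : mor G -> X -> option X).
Hypothesis Hact : partial_cat_action act.

Lemma act_ob (f : mor G) (x : X) :
  is_ob G f -> defined (act f x) -> act f x = Some x.
Proof. destruct Hact as [_ [Hob _]]; apply Hob. Qed.

Lemma act_comp (g h : mor G) (x y : X) :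
  composable G g h -> act h x = Some y -> act (comp G g h) x = act g y.
Proof.
  destruct Hact as [_ [_ [_ Hcomp]]].
  intros Hgh Hhx.
  destruct (Hcomp g h x y Hgh Hhx) as [Hdef Heq].
  destruct (act (comp G g h) x) as [z|] eqn:Hz.
  - apply Heq; exists z; reflexivity.
  - destruct (act g y) as [z|] eqn:Hy; [|reflexivity].
    destruct (proj2 Hdef (ex_intro _ z eq_refl)) as [w Hw]; discriminate.
Qed.

Definition act_pair (p : mor G * X) : option X := act (fst p) (snd p).

Lemma sim_act_pair (p q : mor G * X) : sim act p q -> act_pair p = act_pair q.
Proof.
  destruct p as [g x], q as [g' x']; unfold act_pair; simpl.
  intros [_ [_ [[h [Hg'h [Hhx Hg]]] | [Hx [Hg [Hg' [Hgx Hg'x']]]]]]];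
    simpl in *; subst.
  - exact (act_comp Hg'h Hhx).
  - now rewrite (act_ob Hg Hgx), (act_ob Hg' Hg'x').
Qed.

Lemma simeq_act_pair (p q : mor G * X) : simeq act p q -> act_pair p = act_pair q.
Proof. apply clos_refl_sym_trans_invariant, sim_act_pair. Qed.

End PartialCatAction.

Theorem proposition3p9 (G : SmallCat) (X : Type) (act : mor G -> X -> option X)
  (Hact : partial_cat_action act) (g g' : mor G) (x x' : X) :
  Xbar act (g, x) -> Xbar act (g', x') ->
  simeq act (g, x) (g', x') ->
  (defined (act g x) <-> defined (act g' x')) /\
  (defined (act g x) -> act g x = act g' x').
Proof.
  intros _ _ Hsimeq.
  assert (Heq : act g x = act g' x') by exact (simeq_act_pair Hact Hsimeq).
  rewrite Heq; split; [tauto | auto].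
Qed.
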